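(* Let $L=\langle S,A,\to\rangle$ be a labelled transition system and $x,y\in\{o,b\}$. Then $(x,y)$-generic bisimilarity $\mathrel{\underline{\leftrightarrow}}_{(x,y)}$ is an equivalence relation on $S$.
   Context: An LTS is $\langle S,A,\to\rangle$ with states $S$, actions $A$ containing the internal action $\tau$, and $\to\subseteq S\times A\times S$; write $s\xrightarrow{a}t$, and $\twoheadrightarrow$ for the reflexive-transitive closure of $\xrightarrow{\tau}$. For $R\subseteq S\times S$ and $s,s',t$: $s\twoheadrightarrow_{o,R,t}s'$ iff $s\twoheadrightarrow s'$; $s\twoheadrightarrow_{b,R,t}s'$ iff $s\twoheadrightarrow s'$, $t\,R\,s$ and $t\,R\,s'$. For $x,y\in\{o,b\}$, a symmetric $R$ is an $(x,y)$-generic bisimulation if whenever $s\,R\,t$ and $s\xrightarrow{a}s'$, either $a=\tau$ and $s'\,R\,t$, or there exist $t',t_1,t_2$ with $t\twoheadrightarrow_{x,R,s}t_1\xrightarrow{a}t_2\twoheadrightarrow_{y,R,s'}t'$ and $s'\,R\,t'$. $s\mathrel{\underline{\leftrightarrow}}_{(x,y)}t$ iff some $(x,y)$-generic bisimulation relates $s$ and $t$. *)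

From Stdlib Require Import Relations RelationClasses Relation_Operators.

Set Implicit Arguments.

Record LTS := {
  St : Type;
  Act : Type;
  tau : Act;
  step : St -> Act -> St -> Prop
}.

(* The two kinds of tau-paths: o (unrestricted) and b (branching). *)
Inductive kind := o | b.

Section Generic.
Variable L : LTS.

Definition tau_steps : St L -> St L -> Prop :=
  clos_refl_trans (St L) (fun s s' => step L s (tau L) s').

Definition kpath (x : kind) (R : St L -> St L -> Prop) (t s s' : St L) : Prop :=
  match x with
  | o => tau_steps s s'
  | b => tau_steps s s' /\ R t s /\ R t s'
  end.

Definition generic_bisim (x y : kind) (R : St L -> St L -> Prop) : Prop :=
  (forall s t, R s t -> R t s) /\
  (forall s t a s', R s t -> step L s a s' ->
     (a = tau L /\ R s' t) \/
     (exists t' t1 t2, kpath x R s t t1 /\ step L t1 a t2 /\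
                       kpath y R s' t2 t' /\ R s' t')).

Definition generic_bisimilar (x y : kind) (s t : St L) : Prop :=
  exists R, generic_bisim x y R /\ R s t.

End Generic.

(** Only transitivity needs an argument. Call a symmetric relation a
    semi-bisimulation if it satisfies the (x,y)-generic transfer condition,
    except that a τ-move may also be answered by [t ->>_x t1 ->>_y t'], i.e.
    with the middle τ-step omitted. Semi-bisimulations transfer τ-paths, and
    this makes them closed under relational composition, so the largest one,
    semi-bisimilarity, is transitive. It is also closed under stuttering: a
    state on a τ-path between two partners of [q] is itself a partner of [q].
    Stuttering lets one cut an answer [t ->> t1 ->> t'] to a τ-move at its
    first or last τ-step, so semi-bisimilarity is an (x,y)-generic
    bisimulation. As every generic bisimulation is a semi-bisimulation,
    generic bisimilarity coincides with semi-bisimilarity. *)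

From Stdlib Require Import RelationClasses.
From Stdlib Require Import Relations Operators_Properties.

Set Implicit Arguments.
Unset Strict Implicit.

Section SemiBisimulation.
Variable L : LTS.
Variables x y : kind.

Lemma kpathP k (R : St L -> St L -> Prop) t s s' :
  kpath L k R t s s' <-> tau_steps L s s' /\ (k = b -> R t s /\ R t s').
Proof. destruct k; simpl; intuition discriminate. Qed.

Lemma kpath_tau_steps k (R : St L -> St L -> Prop) t s s' :
  kpath L k R t s s' -> tau_steps L s s'.
Proof. intros K; apply kpathP in K; apply K. Qed.

Lemma kpath_refl k (R : St L -> St L -> Prop) t s :
  R t s -> kpath L k R t s s.
Proof. intros H; apply kpathP; split; [apply rt_refl | auto]. Qed.

Lemma kpath_mono k (R R' : St L -> St L -> Prop) t s s' :
  (forall u v, R u v -> R' u v) -> kpath L k R t s s' -> kpath L k R' t s s'.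
Proof. destruct k; simpl; firstorder. Qed.

Lemma tau_steps_first s s' :
  tau_steps L s s' ->
  s = s' \/ exists m, step L s (tau L) m /\ tau_steps L m s'.
Proof.
  intros H; apply clos_rt_rt1n_iff in H as [| m s'' Hm Hp]; [now left | right].
  exists m; split; [exact Hm | apply clos_rt_rt1n_iff, Hp].
Qed.

Lemma tau_steps_last s s' :
  tau_steps L s s' ->
  s = s' \/ exists m, tau_steps L s m /\ step L m (tau L) s'.
Proof.
  intros H; apply clos_rt_rtn1_iff in H as [| m s'' Hm Hp]; [now left | right].
  exists m; split; [apply clos_rt_rtn1_iff, Hp | exact Hm].
Qed.

Definition opt_step (a : Act L) (t t' : St L) : Prop :=
  step L t a t' \/ (a = tau L /\ t = t').

Lemma opt_step_tau_steps t t' : opt_step (tau L) t t' -> tau_steps L t t'.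
Proof. intros [H | [_ <-]]; [apply rt_step, H | apply rt_refl]. Qed.

Definition answers (R : St L -> St L -> Prop) (s t : St L) (a : Act L)
    (s' : St L) : Prop :=
  exists t1 t2 t', kpath L x R s t t1 /\ opt_step a t1 t2 /\
                   kpath L y R s' t2 t' /\ R s' t'.

Lemma answers_mono (R R' : St L -> St L -> Prop) s t a s' :
  (forall u v, R u v -> R' u v) -> answers R s t a s' -> answers R' s t a s'.
Proof.
  intros HR (t1 & t2 & t' & K1 & Ht & K2 & H').
  exists t1, t2, t'; repeat split; eauto using kpath_mono.
Qed.

Lemma answers_prepend (R : St L -> St L -> Prop) s t q a s' :
  R s t -> tau_steps L t q -> answers R s q a s' -> answers R s t a s'.
Proof.
  intros Hst Htq (t1 & t2 & t' & K1 & Ht & K2 & H').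
  exists t1, t2, t'; repeat split; auto.
  apply kpathP in K1 as [P1 Q1]; apply kpathP; split.
  - eapply rt_trans; eassumption.
  - intros e; split; [exact Hst | apply Q1, e].
Qed.

Lemma answers_tau (R : St L -> St L -> Prop) s t s' :
  answers R s t (tau L) s' -> exists t', tau_steps L t t' /\ R s' t'.
Proof.
  intros (t1 & t2 & t' & K1 & Ht & K2 & H'); exists t'; split; [| exact H'].
  eapply rt_trans; [apply (kpath_tau_steps K1) |].
  eapply rt_trans; [apply opt_step_tau_steps, Ht | apply (kpath_tau_steps K2)].
Qed.

Record semi_bisim (R : St L -> St L -> Prop) : Prop := {
  semi_bisim_sym : forall s t, R s t -> R t s;
  semi_bisim_answers : forall s t a s',
    R s t -> step L s a s' -> answers R s t a s'
}.

Lemma semi_bisim_answers_opt R s t a s' :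
  semi_bisim R -> R s t -> opt_step a s s' -> answers R s t a s'.
Proof.
  intros HR Hst [Hs | [-> <-]]; [exact (semi_bisim_answers HR Hst Hs) |].
  exists t, t, t; repeat split; auto using kpath_refl.
  right; split; reflexivity.
Qed.

Lemma semi_bisim_transfer R s s1 t :
  semi_bisim R -> R s t -> tau_steps L s s1 ->
  exists t1, tau_steps L t t1 /\ R s1 t1.
Proof.
  intros HR Hst Hp; apply clos_rt_rt1n_iff in Hp; revert t Hst.
  induction Hp as [s | s m s1 Hsm _ IH]; intros t Hst.
  - exists t; split; [apply rt_refl | exact Hst].
  - destruct (answers_tau (semi_bisim_answers HR Hst Hsm)) as (t' & Htt' & Hmt').
    destruct (IH _ Hmt') as (t1 & Ht't1 & Hs1t1).
    exists t1; split; [eapply rt_trans |]; eassumption.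
Qed.

Definition rel_comp (R R' : St L -> St L -> Prop) (s t : St L) : Prop :=
  exists u, R s u /\ R' u t.

Lemma semi_bisim_comp R : semi_bisim R -> semi_bisim (rel_comp R R).
Proof.
  intros HR; split.
  - intros s t (u & Hsu & Hut); exists u; split; apply HR; assumption.
  - intros s t a s' (u & Hsu & Hut) Hs.
    destruct (semi_bisim_answers HR Hsu Hs)
      as (u1 & u2 & u' & K1 & Hu & K2 & Hs'u').
    apply kpathP in K1 as [P1 Q1]; apply kpathP in K2 as [P2 Q2].
    destruct (semi_bisim_transfer HR Hut P1) as (t1 & Htt1 & Hu1t1).
    destruct (semi_bisim_answers_opt HR Hu1t1 Hu)
      as (t2 & t3 & t4 & J1 & Ht & J2 & Hu2t4).
    apply kpathP in J1 as [R1 S1]; apply kpathP in J2 as [R2 S2].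
    destruct (semi_bisim_transfer HR Hu2t4 P2) as (t5 & Ht4t5 & Hu't5).
    exists t2, t3, t5; repeat split; auto.
    + apply kpathP; split; [eapply rt_trans; eassumption |].
      intros e; destruct (Q1 e), (S1 e); split; [exists u | exists u1]; auto.
    + apply kpathP; split; [eapply rt_trans; eassumption |].
      intros e; destruct (Q2 e), (S2 e); split; [exists u2 | exists u']; auto.
    + exists u'; auto.
Qed.

Definition stutter_related (R : St L -> St L -> Prop) (s t : St L) : Prop :=
  exists r0 rn, tau_steps L r0 t /\ tau_steps L t rn /\ R s r0 /\ R s rn.

Definition stutter_closure (R : St L -> St L -> Prop) (s t : St L) : Prop :=
  R s t \/ stutter_related R s t \/ stutter_related R t s.

Lemma semi_bisim_stutter_closure R :
  semi_bisim R -> semi_bisim (stutter_closure R).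
Proof.
  intros HR.
  assert (Hincl : forall u v, R u v -> stutter_closure R u v) by (left; auto).
  split.
  - intros s t [H | [H | H]]; [left; apply HR | right; right | right; left];
      exact H.
  - intros s t a s' Hst Hs; pose proof Hst as Hclos.
    destruct Hst as [H | [(r0 & rn & P0 & Pn & H0 & Hn) |
                          (r0 & rn & P0 & Pn & H0 & Hn)]].
    + eapply answers_mono, semi_bisim_answers; eassumption.
    + apply (answers_prepend Hclos Pn).
      eapply answers_mono, semi_bisim_answers; eassumption.
    + destruct (semi_bisim_transfer HR (semi_bisim_sym HR H0) P0)
        as (q & Htq & Hsq).
      apply (answers_prepend Hclos Htq).
      eapply answers_mono, semi_bisim_answers; eassumption.
Qed.

Definition semi_bisimilar (s t : St L) : Prop :=
  exists R, semi_bisim R /\ R s t.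

Lemma semi_bisimilar_sym s t : semi_bisimilar s t -> semi_bisimilar t s.
Proof. intros (R & HR & H); exists R; split; [| apply HR]; assumption. Qed.

Lemma semi_bisimilar_semi_bisim : semi_bisim semi_bisimilar.
Proof.
  split; [exact semi_bisimilar_sym |].
  intros s t a s' (R & HR & Hst) Hs.
  apply (answers_mono (R := R)); [| exact (semi_bisim_answers HR Hst Hs)].
  intros u v H; exists R; auto.
Qed.

Lemma semi_bisimilar_trans s u t :
  semi_bisimilar s u -> semi_bisimilar u t -> semi_bisimilar s t.
Proof.
  intros Hsu Hut; exists (rel_comp semi_bisimilar semi_bisimilar).
  split; [apply semi_bisim_comp, semi_bisimilar_semi_bisim | exists u; auto].
Qed.

Lemma semi_bisimilar_stutter q r0 w rn :
  semi_bisimilar q r0 -> semi_bisimilar q rn ->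
  tau_steps L r0 w -> tau_steps L w rn -> semi_bisimilar q w.
Proof.
  intros H0 Hn P0 Pn; exists (stutter_closure semi_bisimilar).
  split; [apply semi_bisim_stutter_closure, semi_bisimilar_semi_bisim |].
  right; left; exists r0, rn; auto.
Qed.

Lemma kpath_semi_bisimilar_split k s u w u' :
  kpath L k semi_bisimilar s u u' -> tau_steps L u w -> tau_steps L w u' ->
  kpath L k semi_bisimilar s u w /\ kpath L k semi_bisimilar s w u'.
Proof.
  intros K Huw Hwu'; apply kpathP in K as [_ Q].
  assert (Hw : k = b -> semi_bisimilar s w).
  { intros e; destruct (Q e) as [Hu Hu'].
    exact (semi_bisimilar_stutter Hu Hu' Huw Hwu'). }
  split; apply kpathP; split; auto; intros e; destruct (Q e); auto.
Qed.

Lemma semi_bisimilar_generic_bisim : generic_bisim L x y semi_bisimilar.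
Proof.
  split; [exact semi_bisimilar_sym |].
  intros s t a s' Hst Hs.
  destruct (semi_bisim_answers semi_bisimilar_semi_bisim Hst Hs)
    as (t1 & t2 & t' & K1 & [Ht | [-> <-]] & K2 & Hs't').
  { right; exists t', t1, t2; auto. }
  destruct (tau_steps_first (kpath_tau_steps K2)) as [<- | (m & Hm & Pm)].
  - destruct (tau_steps_last (kpath_tau_steps K1)) as [<- | (m & Pm & Hm)]; [left; auto |].
    right; exists t1, m, t1; repeat split; auto using kpath_refl.
    exact (proj1 (kpath_semi_bisimilar_split K1 Pm (rt_step _ _ _ _ Hm))).
  - right; exists t', t1, m; repeat split; auto.
    exact (proj2 (kpath_semi_bisimilar_split K2 (rt_step _ _ _ _ Hm) Pm)).
Qed.

Lemma generic_bisim_semi_bisim R : generic_bisim L x y R -> semi_bisim R.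
Proof.
  intros [Hsym Hans]; split; [exact Hsym |].
  intros s t a s' Hst Hs.
  destruct (Hans _ _ _ _ Hst Hs)
    as [[-> Hs't] | (t' & t1 & t2 & K1 & Ht & K2 & Hs't')].
  - exists t, t, t; repeat split; auto using kpath_refl.
    right; split; reflexivity.
  - exists t1, t2, t'; repeat split; auto; left; exact Ht.
Qed.

Lemma generic_bisimilar_semi_bisimilar s t :
  generic_bisimilar L x y s t -> semi_bisimilar s t.
Proof.
  intros (R & HR & H); exists R; split; [apply generic_bisim_semi_bisim |];
    assumption.
Qed.

Lemma eq_generic_bisim : generic_bisim L x y eq.
Proof.
  split; [intros s t; apply eq_sym |].
  intros s t a s' <- Hs; right; exists s', s, s'.
  repeat split; auto using kpath_refl.
Qed.

End SemiBisimulation.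

Theorem corollary4p7 (L : LTS) (x y : kind) :
  Equivalence (generic_bisimilar L x y).
Proof.
  split.
  - intros s; exists eq; split; [apply eq_generic_bisim | reflexivity].
  - intros s t (R & HR & Hst); exists R; split; [| apply HR]; assumption.
  - intros s u t Hsu Hut; exists (semi_bisimilar x y).
    split; [apply semi_bisimilar_generic_bisim |].
    eapply semi_bisimilar_trans; apply generic_bisimilar_semi_bisimilar;
      eassumption.
Qed.
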